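(* Let $N\ge 1$ and let $b$ be an atomic program term. For each $m\in\{1,\ldots,N\}$ let $\mathfrak{M}_m$ and $A_m$ be as defined in the context. Then for all $k,m\in\{1,\ldots,N\}$ and every state $x$ of $\mathfrak{M}_k$: $\mathfrak{M}_k,x\models A_m$ if, and only if, $k=m$ and $x=r_m$.
   Context: IPDL formulas are built from propositional variables, $\bot$, $\rightarrow$ and box modalities $[\alpha]$ indexed by program terms built from atomic program terms; $\top=\neg\bot$ and $\langle\alpha\rangle\psi=\neg[\alpha]\neg\psi$. A Kripke model is $(S,\{R_a\}_{a\in AP},V)$ with $S$ a nonempty set, binary relations $R_a$ on $S$ for each atomic program $a$, and valuation $V$; $\mathfrak{M},s\models[a]\psi$ iff $\psi$ holds at every $t$ with $(s,t)\in R_a$, and Boolean connectives are classical. For $m\ge 1$, $\mathfrak{M}_m=(S_m,\{R_a\}_{a\in AP},V_m)$ where $S_m=\{r_m,t^m,s^m_1,\ldots,s^m_m\}$ (distinct states), $R_b$ is the transitive closure of $\{(r_m,t^m),(t^m,t^m),(r_m,s^m_1)\}\cup\{(s^m_i,s^m_{i+1}):1\le i\le m-1\}$, $R_a=\varnothing$ for $a\neq b$, and $V_m(p)=\varnothing$ for every variable $p$. Define $\langle b\rangle^0\psi=\psi$, $\langle b\rangle^{j+1}\psi=\langle b\rangle\langle b\rangle^j\psi$, and $$A_m=\langle b\rangle^m[b]\bot\wedge\neg\langle b\rangle^{m+1}[b]\bot\wedge\langle b\rangle(\langle b\rangle\top\wedge[b]\langle b\rangle\top).$$ *)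

From mathcomp Require Import all_boot.
From Stdlib Require Import Relations.

Set Implicit Arguments.
Unset Strict Implicit.

Inductive prog (AP : Type) : Type :=
  | PAtom : AP -> prog AP
  | PSeq : prog AP -> prog AP -> prog AP
  | PUnion : prog AP -> prog AP -> prog AP
  | PInter : prog AP -> prog AP -> prog AP
  | PStar : prog AP -> prog AP.

Inductive form (AP PV : Type) : Type :=
  | FVar : PV -> form AP PV
  | FBot : form AP PV
  | FImp : form AP PV -> form AP PV -> form AP PV
  | FBox : prog AP -> form AP PV -> form AP PV.

Arguments FBot {AP PV}.

Definition FNeg {AP PV} (f : form AP PV) : form AP PV := FImp f FBot.
Definition FTop {AP PV} : form AP PV := FNeg FBot.
Definition FAnd {AP PV} (f g : form AP PV) : form AP PV := FNeg (FImp f (FNeg g)).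
Definition FDia {AP PV} (a : prog AP) (f : form AP PV) : form AP PV :=
  FNeg (FBox a (FNeg f)).

Record kripke (AP PV : Type) := Kripke {
  kstate : Type;
  knonempty : inhabited kstate;
  krel : AP -> kstate -> kstate -> Prop;
  kval : PV -> kstate -> Prop }.

Fixpoint prel (AP PV : Type) (M : kripke AP PV) (al : prog AP) : kstate M -> kstate M -> Prop :=
  match al with
  | PAtom a => @krel AP PV M a
  | PSeq a1 a2 => fun s u => exists t, @prel AP PV M a1 s t /\ @prel AP PV M a2 t u
  | PUnion a1 a2 => fun s u => @prel AP PV M a1 s u \/ @prel AP PV M a2 s u
  | PInter a1 a2 => fun s u => @prel AP PV M a1 s u /\ @prel AP PV M a2 s u
  | PStar a1 => clos_refl_trans _ (@prel AP PV M a1)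
  end.

Fixpoint sat (AP PV : Type) (M : kripke AP PV) (s : kstate M) (f : form AP PV) : Prop :=
  match f with
  | FVar p => @kval AP PV M p s
  | FBot => False
  | FImp f1 f2 => @sat AP PV M s f1 -> @sat AP PV M s f2
  | FBox a g => forall t, @prel AP PV M a s t -> @sat AP PV M t g
  end.

Inductive mstate (m : nat) : Type :=
  | Root : mstate m
  | Tst : mstate m
  | Sst : 'I_m -> mstate m.         (* Sst i = s^m_{i+1} *)

Arguments Root {m}.
Arguments Tst {m}.

Inductive mbase (m : nat) : mstate m -> mstate m -> Prop :=
  | mb_rt : mbase Root Tst
  | mb_tt : mbase Tst Tst
  | mb_rs : forall i : 'I_m, nat_of_ord i = 0 -> mbase Root (Sst i)
  | mb_ss : forall i j : 'I_m, nat_of_ord j = (nat_of_ord i).+1 -> mbase (Sst i) (Sst j).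

Definition Mm (AP PV : Type) (b : AP) (m : nat) : kripke AP PV :=
  @Kripke AP PV (mstate m) (inhabits Root)
    (fun a s t => a = b /\ clos_trans _ (@mbase m) s t)
    (fun _ _ => False).

Fixpoint diapow {AP PV} (b : AP) (j : nat) (f : form AP PV) : form AP PV :=
  match j with
  | 0 => f
  | j'.+1 => FDia (PAtom b) (diapow b j' f)
  end.

Definition Aform {AP PV} (b : AP) (m : nat) : form AP PV :=
  FAnd (diapow b m (FBox (PAtom b) FBot))
   (FAnd (FNeg (diapow b m.+1 (FBox (PAtom b) FBot)))
         (FDia (PAtom b) (FAnd (FDia (PAtom b) FTop) (FBox (PAtom b) (FDia (PAtom b) FTop))))).

Arguments prel {AP PV} M al _ _.
Arguments sat {AP PV} M s f.

From mathcomp Require Import all_boot.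
From Stdlib Require Import Relations Setoid Classical Lia.
From mathcomp Require Import zify.

Set Implicit Arguments.
Unset Strict Implicit.

(* Since R_b is transitive, the only dead end of M_k is s^k_k, and it can be
   reached in exactly j steps from r_k for every 1 <= j <= k, from s^k_i for
   every 1 <= j <= k - i (and in 0 steps only from s^k_k itself), and never
   from t^k.  So for m >= 1 the first two conjuncts of A_m hold at r_k iff
   m = k, and fail at t^k.  The third conjunct, a successor that has successors all of
   which have successors, is witnessed at r_k by the loop at t^k, and fails at
   every s^k_i because s^k_k is a successor of each successor of s^k_i. *)

Section KripkeSemantics.
Variables (AP PV : Type) (M : kripke AP PV).

Lemma sat_FTop s : sat M s FTop.
Proof. exact: id. Qed.

Lemma sat_FAnd s f g : sat M s (FAnd f g) <-> sat M s f /\ sat M s g.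
Proof.
split=> [nfg | [sf sg] nfg]; last exact: nfg sf sg.
by split; apply: NNPP => nsat; apply: nfg => sf sg.
Qed.

Lemma sat_FDia s a f :
  sat M s (FDia a f) <-> exists2 t, prel M a s t & sat M t f.
Proof.
split=> [nbox | [t st ft] nbox]; last exact: nbox t st ft.
by apply: NNPP => nex; apply: nbox => t st ft; apply: nex; exists t.
Qed.

End KripkeSemantics.

Section Reachability.
Variable k : nat.

Definition reach (x y : mstate k) : Prop :=
  match x, y with
  | Root, Tst | Tst, Tst | Root, Sst _ => True
  | Sst i, Sst j => i < j
  | _, _ => False
  end.

Lemma clos_trans_mbase_Sst (i j : 'I_k) :
  i < j -> clos_trans _ (@mbase k) (Sst i) (Sst j).
Proof.
case: j => j /=; elim: j => [|j IHj] lt_jk // lt_ij.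
rewrite ltnS leq_eqVlt in lt_ij; case/orP: lt_ij => [/eqP eq_ij | lt_ij].
  by apply: t_step; apply: mb_ss; rewrite /= eq_ij.
by apply: t_trans (IHj (ltnW lt_jk) lt_ij) _; apply: t_step; apply: mb_ss.
Qed.

Lemma clos_trans_mbaseE x y : clos_trans _ (@mbase k) x y <-> reach x y.
Proof.
split.
  elim=> {x y} [x y [] // i j /= -> // | x y z _ rxy _ ryz].
  by case: x y z rxy ryz => [| | ?] [| | ?] [| | ?] //= /ltn_trans; apply.
case: x => [| | i]; case: y => [| | j] //= rxy; try by do 2 constructor.
  have k_gt0 : 0 < k by apply: leq_ltn_trans (ltn_ord j).
  case: (posnP j) => [j0 | j_gt0]; first by apply: t_step; apply: mb_rs.
  apply: (t_trans _ _ _ (Sst (Ordinal k_gt0))); first exact: t_step (mb_rs _).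
  exact: clos_trans_mbase_Sst.
exact: clos_trans_mbase_Sst.
Qed.

Definition reaches_sink_in (x : mstate k) (j : nat) : Prop :=
  match x with
  | Root => 0 < j <= k
  | Tst => False
  | Sst i => if j is 0 then i.+1 = k else i + j < k
  end.

Lemma reaches_sink_in0 x : reaches_sink_in x 0 <-> forall y, ~ reach x y.
Proof.
case: x => [| | i] /=; split=> //; try by move/(_ Tst).
- by move=> eq_ik [| | j] //=; have := ltn_ord j; lia.
- move=> dead; apply: NNPP => ne_ik.
  have lt_ik : i.+1 < k by have := ltn_ord i; lia.
  exact: (dead (Sst (Ordinal lt_ik))).
Qed.

Lemma reaches_sink_inS x j :
  reaches_sink_in x j.+1 <-> exists2 y, reach x y & reaches_sink_in y j.
Proof.
case: x => [| | i] /=; split.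
- case: j => [|j] ?.
    have lt_k : k.-1 < k by lia.
    by exists (Sst (Ordinal lt_k)) => //=; lia.
  have k_gt0 : 0 < k by lia.
  by exists (Sst (Ordinal k_gt0)) => //=; lia.
- by case=> -[| | i] //= _; case: j => [|j] /=; have := ltn_ord i; lia.
- by [].
- by case=> -[| | ?].
- case: j => [|j] lt_ik.
    have lt_k : k.-1 < k by lia.
    by exists (Sst (Ordinal lt_k)) => //=; lia.
  have lt_i1k : i.+1 < k by lia.
  by exists (Sst (Ordinal lt_i1k)) => //=; lia.
- by case=> -[| | i'] //= lt_ii'; case: j => [|j] /=; have := ltn_ord i'; lia.
Qed.

End Reachability.

Section Model.
Variables (AP PV : Type) (b : AP) (k : nat).
Local Notation M := (Mm PV b k).

Lemma prel_Mm_atom (x y : mstate k) : prel M (PAtom b) x y <-> reach x y.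
Proof. by split=> [[_ /clos_trans_mbaseE] | /clos_trans_mbaseE]. Qed.

Lemma sat_Mm_box (x : mstate k) f :
  sat M x (FBox (PAtom b) f) <-> forall y, reach x y -> sat M y f.
Proof. by split=> box y /prel_Mm_atom; apply: box. Qed.

Lemma sat_Mm_dia (x : mstate k) f :
  sat M x (FDia (PAtom b) f) <-> exists2 y, reach x y & sat M y f.
Proof. by rewrite sat_FDia; split=> -[y /prel_Mm_atom rxy fy]; exists y. Qed.

Lemma sat_diapow_sink x j :
  sat M x (diapow b j (FBox (PAtom b) FBot)) <-> reaches_sink_in x j.
Proof.
elim: j x => [|j IHj] x.
  by rewrite sat_Mm_box reaches_sink_in0.
rewrite sat_Mm_dia reaches_sink_inS.
by split=> -[y rxy /IHj]; exists y.
Qed.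

Definition loop_form : form AP PV :=
  FDia (PAtom b) (FAnd (FDia (PAtom b) FTop) (FBox (PAtom b) (FDia (PAtom b) FTop))).

Lemma sat_loop_form_Root : sat M Root loop_form.
Proof.
have sat_t : sat M Tst (FDia (PAtom b) FTop).
  by apply/sat_Mm_dia; exists Tst => //; apply: sat_FTop.
apply/sat_Mm_dia; exists Tst => //; apply/sat_FAnd; split => //.
by apply/sat_Mm_box => -[| | ?].
Qed.

Lemma sat_loop_form_Sst i : ~ sat M (Sst i) loop_form.
Proof.
case/sat_Mm_dia=> -[| | j] // _ /sat_FAnd[/sat_Mm_dia[[| | l] // lt_jl _]].
have lt_k : k.-1 < k by have := ltn_ord l; lia.
have sink : reaches_sink_in (Sst (Ordinal lt_k)) 0 by rewrite /=; lia.
have lt_jk : j < k.-1 by move: lt_jl => /=; have := ltn_ord l; lia.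
move/sat_Mm_box/(_ (Sst (Ordinal lt_k)) lt_jk)/sat_Mm_dia.
by case=> y /(proj1 (reaches_sink_in0 _) sink).
Qed.

Lemma sat_Aform_Mm x m :
  sat M x (Aform b m) <->
  [/\ reaches_sink_in x m, ~ reaches_sink_in x m.+1 & sat M x loop_form].
Proof.
have [to_sink of_sink] := sat_diapow_sink x m.+1.
rewrite /Aform !sat_FAnd sat_diapow_sink.
split=> [[sink_m [not_sink_m1 loop]] | [sink_m not_sink_m1 loop]].
  by split=> // /of_sink.
by split=> //; split=> // /to_sink.
Qed.

End Model.

Theorem lemma2 (AP PV : Type) (b : AP) (N : nat) :
  1 <= N ->
  forall k m : nat, 1 <= k <= N -> 1 <= m <= N ->
  forall x : kstate (Mm PV b k),
    sat (Mm PV b k) x (Aform b m) <-> (k = m /\ x = Root).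
Proof.
move=> _ k m _ /andP[m_gt0 _] x; rewrite sat_Aform_Mm.
case: x => [| | i] /=; split.
- by case=> sink_m not_sink_m1 _; split=> //; lia.
- by case=> eq_km _; subst k; split; [lia | lia | exact: sat_loop_form_Root].
- by case.
- by case.
- by case=> _ _ loop; case: (sat_loop_form_Sst loop).
- by case.
Qed.
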